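(* Let $n\geqslant 3$ and let $G$ (gene tree) and $S$ (species tree) be caterpillar trees with leaves bijectively labeled by the same set of $n$ labels, not necessarily of the same labeled topology. Number the internal nodes of $G$ by $1,\dots,n-1$ from the cherry to the root. For $1\leqslant j\leqslant n-1$, let $L_j$ be the set of labels of the $j+1$ leaves descended from node $j$ in $G$, let $T_j(G,S)$ be the smallest subtree of $S$ (rooted at a node of $S$ and containing all its descendants) having every label of $L_j$ on one of its leaves, and let $d_j$ be the number of edges separating the root of $T_j(G,S)$ from the root of $S$. For $1\leqslant j\leqslant n-2$ put $c_j=d_j-d_{j+1}$. Then the number of coalescent histories for $(G,S)$ equals $$\sum_{k_1=1}^{1}\ \sum_{k_2=1}^{k_1+c_{n-2}}\ \sum_{k_3=1}^{k_2+c_{n-3}}\cdots\sum_{k_{n-1}=1}^{k_{n-2}+c_{1}} 1,$$ i.e. the summation over $k_m$ ($2\leqslant m\leqslant n-1$) runs from $1$ to $k_{m-1}+c_{n-m}$; in particular this number depends only on the vector $(c_1,\dots,c_{n-2})$, which is a function of the topologies of $G$ and $S$.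
   Context: All trees are binary, rooted, leaf-labeled. A caterpillar tree is one in which some internal node is descended from all other internal nodes; it has a unique cherry (internal node with exactly two descendant leaves). Internal edge $i$ of a caterpillar is the edge immediately above internal node $i$ (nodes numbered $1,\dots,n-1$ from cherry to root), with an extra edge $n-1$ above the root. A coalescent history for $(G,S)$ on the same label set is a map $h$ from internal nodes of $G$ to internal edges of $S$ (including the edge above the root) such that (1) every label of a leaf below node $v$ of $G$ labels a leaf of $S$ below edge $h(v)$, and (2) if $v_2$ is descended from $v_1$ in $G$ then $h(v_2)$ is descended from $h(v_1)$ in $S$ (nodes and edges count as descended from themselves). *)

From mathcomp Require Import all_boot all_order all_algebra all_fingroup.
Set Implicit Arguments. Unset Strict Implicit. Unset Printing Implicit Defensive.

(* A caterpillar on n >= 2 leaves is encoded by a permutation s : 'S_n listing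
   its leaf labels from the bottom: s 0, s 1 label the two cherry leaves, and
   for 2 <= j <= n-1 the leaf labelled s j is the leaf child of internal node j.
   Internal nodes are numbered 1..n-1 from the cherry (node 1) to the root
   (node n-1); internal node j has exactly the leaves s 0, ..., s j below it,
   and internal node i is descended from internal node j iff i <= j.
   Internal edge j of the species tree is the edge immediately above internal
   node j (edge n-1 is the extra edge above the root); the leaves below edge j
   are the leaves below node j, and edge i is descended from edge j iff i <= j. *)

Definition clade (n : nat) (s : 'S_n) (j : nat) : {set 'I_n} :=
  [set s k | k : 'I_n & (k <= j)%N].

Definition cat_desc (i j : nat) : bool := (i <= j)%N.

(* A coalescent history for (G,S): a map h from the internal nodes of G
   to the internal edges of S.  Both are indexed by v : 'I_n.-1, where v
   stands for internal node (resp. edge) number v+1 (so numbers 1..n-1). *)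
Definition is_history (n : nat) (g s : 'S_n) (h : {ffun 'I_n.-1 -> 'I_n.-1}) : bool :=
  [forall v : 'I_n.-1, clade g v.+1 \subset clade s (h v).+1] &&
  [forall v1 : 'I_n.-1, forall v2 : 'I_n.-1,
     cat_desc v2.+1 v1.+1 ==> cat_desc (h v2).+1 (h v1).+1].

Definition num_histories (n : nat) (g s : 'S_n) : nat :=
  #|[set h : {ffun 'I_n.-1 -> 'I_n.-1} | is_history g s h]|.

Definition Lset (n : nat) (g : 'S_n) (j : nat) : {set 'I_n} := clade g j.

(* root of T_j(G,S): the lowest internal node of S whose clade contains L_j
   (since |L_j| >= 2 this smallest subtree is rooted at an internal node). *)
Definition mrca_node (n : nat) (s : 'S_n) (L : {set 'I_n}) : nat :=
  (find (fun i => L \subset clade s i) (iota 1 n.-1)).+1.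

Definition dd (n : nat) (g s : 'S_n) (j : nat) : nat :=
  (n.-1 - mrca_node s (Lset g j))%N.

Definition cc (n : nat) (g s : 'S_n) (j : nat) : int :=
  (dd g s j)%:Z - (dd g s j.+1)%:Z.

(* nested cs k: with cs = [:: a_1; ...; a_r], this is
   sum_{k'_1=1}^{k + a_1} sum_{k'_2=1}^{k'_1 + a_2} ... sum_{k'_r=1}^{k'_{r-1}+a_r} 1 *)
Fixpoint nested (cs : seq int) (k : nat) : nat :=
  match cs with
  | [::] => 1%N
  | c :: cs' =>
      (\sum_(0 <= k' < k + absz c + 1 | (1 <= k')%N && (k'%:Z <= k%:Z + c)%R)
          nested cs' k')%N
  end.

From mathcomp Require Import all_boot all_order all_algebra all_fingroup.
From mathcomp Require Import zify.
Set Implicit Arguments. Unset Strict Implicit. Unset Printing Implicit Defensive.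

(* For caterpillars both conditions on a history become conditions on edge
   numbers: (1) says that h v is at or above the edge e_v above the root of
   T_v(G,S), and (2) says that h is nondecreasing.  So histories are the
   nondecreasing sequences with e_v <= h v <= n-1, and e_(n-1) = n-1 forces
   h (n-1) = n-1.  Counting them by the value of the last free term gives a
   nested sum in which h v ranges over [e_v, h (v+1)]; writing
   h v = e_v + k - 1 makes every range start at k = 1 and turns its upper
   bound into k' + e_(v+1) - e_v = k' + c_v, since d_v = n-1 - e_v. *)

Lemma big_nat_window (f : nat -> nat) (P : pred nat) a M B :
  (forall x, P x = (a <= x < a + M)) -> a + M <= B ->
  \sum_(0 <= x < B | P x) f x = \sum_(0 <= t < M) f (a + t).
Proof.
move=> PE aMB.
rewrite (@big_cat_nat _ _ _ a) //=; last exact: leq_trans (leq_addr _ _) aMB.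
rewrite (@big_cat_nat _ _ _ (a + M) a B) ?leq_addr //=.
rewrite [X in X + _]big_nat_cond [X in X + _]big1 ?add0n; last first.
  by move=> x /andP[/andP[_ xa]]; rewrite PE; lia.
rewrite [X in _ + X]big_nat_cond [X in _ + X]big1 ?addn0; last first.
  by move=> x /andP[/andP[xa _]]; rewrite PE; lia.
rewrite -{1}(add0n a) big_addn addKn big_nat_cond [RHS]big_nat_cond.
apply: eq_big => [x|x _]; last by rewrite addnC.
by rewrite PE; apply/idP/idP => /andP[/andP[]]; lia.
Qed.

Lemma find_iota_monotone (P : pred nat) m :
  {homo P : i j / i <= j >-> i ==> j} -> P m -> 0 < m ->
  find P (iota 1 m) < m /\
  forall e, e < m -> P e.+1 = (find P (iota 1 m) <= e).
Proof.
move=> mono Pm m0.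
have hasP : has P (iota 1 m) by apply/hasP; exists m; rewrite // mem_iota; lia.
have find_lt : find P (iota 1 m) < m by rewrite -[m in _ < m](size_iota 1) -has_find.
split=> // e em; have := nth_find 0 hasP; rewrite nth_iota // => Pfind.
apply/idP/idP => [Pe|le]; last by apply: (implyP (mono _ _ _) Pfind); lia.
rewrite leqNgt; apply/negP => lt; have := before_find 0 lt.
by rewrite nth_iota // add1n Pe.
Qed.

Lemma map_sub_iotaS (T : Type) (F : nat -> T) j :
  [seq F (j.+1 - i) | i <- iota 0 j.+1] = F j.+1 :: [seq F (j - i) | i <- iota 0 j].
Proof.
by rewrite /= subn0 -[1]addn0 iotaDl -map_comp.
Qed.

Section BoundedMonotone.

Variables (N : nat) (lb : nat -> nat).

Definition bounded_monotone (j H : nat) (f : {ffun 'I_j -> 'I_N}) : bool :=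
  [forall i : 'I_j, (lb i <= f i) && (f i <= H)] &&
  [forall i1 : 'I_j, forall i2 : 'I_j, (i2 <= i1) ==> (f i2 <= f i1)].

Definition count_bounded_monotone (j H : nat) : nat :=
  #|[set f : {ffun 'I_j -> 'I_N} | bounded_monotone H f]|.

Definition ffun_snoc (j : nat) (p : 'I_N * {ffun 'I_j -> 'I_N}) :
    {ffun 'I_j.+1 -> 'I_N} :=
  [ffun i => if unlift ord_max i is Some i' then p.2 i' else p.1].

Definition ffun_unsnoc (j : nat) (f : {ffun 'I_j.+1 -> 'I_N}) :
    'I_N * {ffun 'I_j -> 'I_N} :=
  (f ord_max, [ffun i => f (lift ord_max i)]).

Lemma ffun_snoc_max j x (f : {ffun 'I_j -> 'I_N}) : ffun_snoc (x, f) ord_max = x.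
Proof. by rewrite ffunE unlift_none. Qed.

Lemma ffun_snoc_lift j x (f : {ffun 'I_j -> 'I_N}) i :
  ffun_snoc (x, f) (lift ord_max i) = f i.
Proof. by rewrite ffunE liftK. Qed.

Lemma ffun_snoc_bij j : bijective (@ffun_snoc j).
Proof.
exists (@ffun_unsnoc j) => [[x f]|f].
  rewrite /ffun_unsnoc ffun_snoc_max; congr pair.
  by apply/ffunP => i; rewrite ffunE ffun_snoc_lift.
apply/ffunP => i; rewrite ffunE.
by case: unliftP => [i' ->|->]; rewrite ?ffunE.
Qed.

Lemma bounded_monotone_snoc j H x (f : {ffun 'I_j -> 'I_N}) :
  bounded_monotone H (ffun_snoc (x, f)) = (lb j <= x <= H) && bounded_monotone x f.
Proof.
apply/idP/idP.
- case/andP => /forallP bnd /forallP mono.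
  have := bnd ord_max; rewrite ffun_snoc_max => -> /=.
  apply/andP; split; apply/forallP => i.
    have /andP[+ _] := bnd (lift ord_max i); rewrite ffun_snoc_lift lift_max => -> /=.
    have /forallP/(_ (lift ord_max i)) := mono ord_max.
    by rewrite ffun_snoc_lift ffun_snoc_max lift_max /= ltnW.
  apply/forallP => i2; have /forallP/(_ (lift ord_max i2)) := mono (lift ord_max i).
  by rewrite !ffun_snoc_lift !lift_max.
- case/andP => /andP[lbx xH] /andP[/forallP bnd /forallP mono].
  apply/andP; split; apply/forallP => i.
    case: (unliftP ord_max i) => [i' ->|->]; rewrite ?ffun_snoc_max ?lbx //.
    rewrite ffun_snoc_lift lift_max.
    by have /andP[-> fx] := bnd i'; apply: leq_trans fx xH.
  apply/forallP => i2; apply/implyP.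
  case: (unliftP ord_max i) => [i' ->|->]; case: (unliftP ord_max i2) => [i2' ->|->];
    rewrite ?ffun_snoc_lift ?ffun_snoc_max ?lift_max //=.
  + by move=> le; have /forallP/(_ i2')/implyP := mono i'; apply.
  + by rewrite leqNgt ltn_ord.
  + by have /andP[_ ->] := bnd i2'.
Qed.

Lemma count_bounded_monotone0 H : count_bounded_monotone 0 H = 1.
Proof.
rewrite /count_bounded_monotone (_ : [set f | _] = setT).
  by rewrite cardsT card_ffun !card_ord.
by apply/setP => f; rewrite !inE; apply/andP; split; apply/forallP => -[].
Qed.

Lemma count_bounded_monotoneS j H :
  count_bounded_monotone j.+1 H =
  \sum_(x < N | lb j <= x <= H) count_bounded_monotone j x.
Proof.
rewrite /count_bounded_monotone -sum1_card.
rewrite (reindex (@ffun_snoc j)) /=; last exact/onW_bij/ffun_snoc_bij.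
pose monotone_below x := [set f : {ffun 'I_j -> 'I_N} | bounded_monotone x f].
rewrite (eq_bigr (fun x : 'I_N => \sum_(f in monotone_below x) 1)); last first.
  by move=> x _; rewrite sum1_card.
rewrite pair_big_dep /=; apply: eq_bigl => -[x f].
by rewrite !inE bounded_monotone_snoc.
Qed.

Lemma count_bounded_monotoneS_tight j H :
  H < N -> lb j = H -> count_bounded_monotone j.+1 H = count_bounded_monotone j H.
Proof.
move=> HN lbH; rewrite count_bounded_monotoneS (big_pred1 (Ordinal HN)) // => x.
by rewrite lbH -eqn_leq.
Qed.

End BoundedMonotone.

Lemma clade_subset n (s : 'S_n) i j : i <= j -> clade s i \subset clade s j.
Proof.
move=> ij; apply/subsetP => x /imsetP[k]; rewrite inE => ki ->.
by apply/imsetP; exists k; rewrite // inE (leq_trans ki ij).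
Qed.

Lemma clade_setT n (s : 'S_n) j : n.-1 <= j -> clade s j = setT.
Proof.
move=> nj; apply/setP => x; rewrite inE; apply/imsetP; exists (s^-1 x)%g.
  by rewrite inE (leq_trans _ nj) // -ltnS (leq_trans (ltn_ord _)) //; lia.
by rewrite permKV.
Qed.

(* Nodes and edges are indexed from 0 in [is_history], so [min_edge g s v] is
   e_(v+1) - 1: [mrca_node s (Lset g v.+1) = (min_edge g s v).+1]. *)
Definition min_edge n (g s : 'S_n) (v : nat) : nat :=
  find (fun e => clade g v.+1 \subset clade s e) (iota 1 n.-1).

Section MinEdge.

Variables (n : nat) (g s : 'S_n).
Hypothesis n_ge2 : 2 <= n.

Let min_edge_spec v :
  min_edge g s v < n.-1 /\
  forall e, e < n.-1 -> (clade g v.+1 \subset clade s e.+1) = (min_edge g s v <= e).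
Proof.
apply: find_iota_monotone; last by lia.
- by move=> a b ab; apply/implyP => /subset_trans; apply; apply: clade_subset.
- by rewrite /= (clade_setT s (leqnn _)) subsetT.
Qed.

Lemma min_edge_lt v : min_edge g s v < n.-1.
Proof. by case: (min_edge_spec v). Qed.

Lemma clade_subset_min_edge v e : e < n.-1 ->
  (clade g v.+1 \subset clade s e.+1) = (min_edge g s v <= e).
Proof. by case: (min_edge_spec v) => _; apply. Qed.

Lemma cc_min_edge j :
  cc g s j.+1 = ((min_edge g s j.+1)%:Z - (min_edge g s j)%:Z)%R.
Proof.
have dd_min_edge v : dd g s v.+1 = n.-2 - min_edge g s v.
  by change (n.-1 - (min_edge g s v).+1 = n.-2 - min_edge g s v); lia.
rewrite /cc !dd_min_edge; have := min_edge_lt j; have := min_edge_lt j.+1; lia.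
Qed.

Lemma min_edge_last : min_edge g s n.-2 = n.-2.
Proof.
apply/eqP; rewrite eqn_leq; apply/andP; split; first by have := min_edge_lt n.-2; lia.
rewrite leqNgt; apply/negP => lt.
set m := n.-2 in lt *; have Em : n.-1 = m.+1 by rewrite /m; lia.
have : clade g m.+1 \subset clade s m.-1.+1 by rewrite clade_subset_min_edge; lia.
have nlt : m.+1 < n by lia.
rewrite prednK ?(leq_ltn_trans _ lt) // -Em (clade_setT g (leqnn _)).
move=> /subsetP /(_ (s (Ordinal nlt)) (in_setT _)) /imsetP[k].
by rewrite inE => km /perm_inj ek; move: km; rewrite -ek /= ltnn.
Qed.

Lemma num_histories_count :
  num_histories g s = count_bounded_monotone n.-1 (min_edge g s) n.-1 n.-2.
Proof.
apply: eq_card => h; rewrite !inE /is_history /bounded_monotone; congr andb.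
apply/forallP/forallP => sub v; have := sub v; rewrite clade_subset_min_edge //.
by move=> ->; rewrite /= -ltnS (leq_trans (ltn_ord _)) //; lia.
by case/andP.
Qed.

Lemma nested_count_bounded_monotone j k : 0 < k -> j < n.-1 ->
  min_edge g s j + k <= n.-1 ->
  nested [seq cc g s (j - i) | i <- iota 0 j] k =
  count_bounded_monotone n.-1 (min_edge g s) j (min_edge g s j + k.-1).
Proof.
elim: j k => [|j IHj] k k_gt0 jn jk; first by rewrite count_bounded_monotone0.
rewrite map_sub_iotaS /= cc_min_edge count_bounded_monotoneS.
have := min_edge_lt j; move: IHj jk.
move: (min_edge g s j) (min_edge g s j.+1) => a b IHj jk a_lt.
rewrite (@big_nat_window _ _ 1 (b + k - a)); first last.
- by lia.
- by move=> x; apply/idP/idP => /andP[x1 x2]; apply/andP; split => //; lia.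
rewrite -(big_mkord (fun x => a <= x <= b + k.-1)).
rewrite [RHS](@big_nat_window _ _ a (b + k - a)); first last.
- by lia.
- by move=> x; apply/idP/idP => /andP[x1 x2]; apply/andP; split; lia.
by apply: eq_big_nat => t /andP[_ tM]; rewrite IHj //; lia.
Qed.

End MinEdge.

Theorem proposition4 (n : nat) (g s : 'S_n) :
  (3 <= n)%N ->
  num_histories g s =
  (\sum_(1 <= k1 < 2) nested [seq cc g s (n.-2 - i) | i <- iota 0 n.-2] k1)%N.
Proof.
case: n g s => [|[|m]] // g s _.
have top_last : min_edge g s m = m := min_edge_last g s isT.
rewrite big_nat1 (@nested_count_bounded_monotone _ _ _ _ m 1) ?top_last ?addn1 //.
by rewrite addn0 num_histories_count // count_bounded_monotoneS_tight.
Qed.
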